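(* For positive semidefinite operators $A,B$, $$\mathrm{Tr}\,(A+B)\,\mathcal{R}_{A+B}(A)\ge \mathrm{Tr}\,A\,\mathcal{T}_{A+B}(A).$$
   Context: All operators act on a finite-dimensional complex Hilbert space. For positive semidefinite $M$ and self-adjoint $\Delta$ supported in the support of $M$: $\mathcal{T}_M(\Delta)=\int_0^\infty (M+sI)^{-1}\Delta(M+sI)^{-1}\,ds$ (the first derivative $\frac{d}{dt}|_{t=0}\log(M+t\Delta)$), and $\mathcal{R}_M(\Delta)=2\int_0^\infty (M+sI)^{-1}\Delta(M+sI)^{-1}\Delta(M+sI)^{-1}\,ds$ (which equals $-\frac{d^2}{dt^2}|_{t=0}\log(M+t\Delta)$). *)

From Stdlib Require Import Reals Lra Lia ClassicalEpsilon.
Open Scope R_scope.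

Record C := mkC { re : R ; im : R }.
Definition C0 : C := mkC 0 0.
Definition C1 : C := mkC 1 0.
Definition Cadd (x y : C) : C := mkC (re x + re y) (im x + im y).
Definition Cmul (x y : C) : C :=
  mkC (re x * re y - im x * im y) (re x * im y + im x * re y).
Definition Cconj (x : C) : C := mkC (re x) (- im x).
Definition Cscal (r : R) (x : C) : C := mkC (r * re x) (r * im x).

Fixpoint Csum (n : nat) (f : nat -> C) : C :=
  match n with
  | O => C0
  | S k => Cadd (Csum k f) (f k)
  end.

(* n x n complex matrices: only entries with indices < n are relevant. *)
Definition Mat := nat -> nat -> C.
Definition mid : Mat := fun i j => if Nat.eqb i j then C1 else C0.
Definition madd (A B : Mat) : Mat := fun i j => Cadd (A i j) (B i j).
Definition mscal (r : R) (A : Mat) : Mat := fun i j => Cscal r (A i j).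
Definition mmul (n : nat) (A B : Mat) : Mat :=
  fun i j => Csum n (fun k => Cmul (A i k) (B k j)).
Definition trace (n : nat) (A : Mat) : C := Csum n (fun i => A i i).

Definition qform (n : nat) (A : Mat) (v : nat -> C) : C :=
  Csum n (fun i => Csum n (fun j => Cmul (Cconj (v i)) (Cmul (A i j) (v j)))).

Definition PSD (n : nat) (A : Mat) : Prop :=
  forall v : nat -> C, im (qform n A v) = 0 /\ 0 <= re (qform n A v).

(* Matrix inverse (the two-sided inverse on indices < n, chosen by epsilon;
   junk if the matrix is not invertible). *)
Definition minv (n : nat) (N : Mat) : Mat :=
  epsilon (inhabits mid)
    (fun X => forall i j, (i < n)%nat -> (j < n)%nat ->
       mmul n X N i j = mid i j /\ mmul n N X i j = mid i j).

Definition resolv (n : nat) (M : Mat) (s : R) : Mat :=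
  minv n (madd M (mscal s mid)).

Definition improper_int (f : R -> R) (l : R) : Prop :=
  (forall a b, 0 < a -> a <= b -> inhabited (Riemann_integrable f a b)) /\
  (forall eps, 0 < eps -> exists d, 0 < d /\ exists Bd,
     forall a b (pr : Riemann_integrable f a b),
       0 < a -> a < d -> Bd < b -> a <= b ->
       Rabs (RiemannInt pr - l) < eps).

Definition mx_improper_int (n : nat) (F : R -> Mat) (L : Mat) : Prop :=
  forall i j, (i < n)%nat -> (j < n)%nat ->
    improper_int (fun s => re (F s i j)) (re (L i j)) /\
    improper_int (fun s => im (F s i j)) (im (L i j)).

Definition is_opT (n : nat) (M D T : Mat) : Prop :=
  mx_improper_int n
    (fun s => mmul n (mmul n (resolv n M s) D) (resolv n M s)) T.

Definition is_opR (n : nat) (M D Rm : Mat) : Prop :=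
  mx_improper_int n
    (fun s => mscal 2 (mmul n (mmul n (mmul n (mmul n (resolv n M s) D)
                                   (resolv n M s)) D) (resolv n M s))) Rm.

(* Write M = A + B, R_s = (M + s)^-1 and phi(s) = Tr A R_s A R_s, the integrand of Tr A T_M(A).
   Since M R_s = 1 - s R_s and d/ds R_s = -R_s^2, cyclicity of the trace turns the integrand of
   Tr M R_M(A) into 2 phi(s) + s phi'(s) = (s phi(s))' + phi(s).  Integrating over (0, oo), the
   boundary term s phi(s) vanishes at both ends because phi is integrable, so the two traces are
   in fact equal; they are real because A and R_s are Hermitian. *)

From Stdlib Require Import Reals Lra Lia ClassicalEpsilon.
From HB Require Import structures.
From mathcomp Require Import all_boot all_order all_algebra Rstruct.

Set Implicit Arguments.
Unset Strict Implicit.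
Unset Printing Implicit Defensive.
Import GRing.Theory.

(* [%R] keeps denoting Stdlib's [R_scope]; MathComp's [ring_scope] is [%ring]. *)
Delimit Scope ring_scope with ring.
Delimit Scope R_scope with R.
Open Scope R_scope.

Lemma C_ext (x y : C) : re x = re y -> im x = im y -> x = y.
Proof. by case: x y => ? ? [? ?] /= -> ->. Qed.

Definition reim (x : C) : R * R := (re x, im x).
Definition of_reim (p : R * R) : C := mkC p.1 p.2.
Lemma reimK : cancel reim of_reim. Proof. by case. Qed.
HB.instance Definition _ := Choice.copy C (can_type reimK).

Definition Copp (x : C) : C := mkC (- re x) (- im x).
Definition Cinv (x : C) : C :=
  let d := re x * re x + im x * im x in mkC (re x / d) (- im x / d).

Lemma CaddA : associative Cadd. Proof. by move=> *; apply: C_ext => /=; ring. Qed.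
Lemma CaddC : commutative Cadd. Proof. by move=> *; apply: C_ext => /=; ring. Qed.
Lemma Cadd0 : left_id C0 Cadd. Proof. by move=> *; apply: C_ext => /=; ring. Qed.
Lemma CaddN : left_inverse C0 Copp Cadd. Proof. by move=> *; apply: C_ext => /=; ring. Qed.
HB.instance Definition _ := GRing.isZmodule.Build C CaddA CaddC Cadd0 CaddN.

Lemma CmulA : associative Cmul. Proof. by move=> *; apply: C_ext => /=; ring. Qed.
Lemma CmulC : commutative Cmul. Proof. by move=> *; apply: C_ext => /=; ring. Qed.
Lemma Cmul1 : left_id C1 Cmul. Proof. by move=> *; apply: C_ext => /=; ring. Qed.
Lemma CmulDl : left_distributive Cmul Cadd.
Proof. by move=> *; apply: C_ext => /=; ring. Qed.
Lemma C1_neq0 : C1 != C0. Proof. by apply/eqP => -[]; lra. Qed.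
HB.instance Definition _ :=
  GRing.Zmodule_isComNzRing.Build C CmulA CmulC Cmul1 CmulDl C1_neq0.

Lemma CmulVx (x : C) : x != 0%ring -> Cmul (Cinv x) x = C1.
Proof.
move=> /eqP x_neq0; have d_neq0 : re x * re x + im x * im x <> 0.
  by move=> d0; apply: x_neq0; apply: C_ext => /=; nra.
by apply: C_ext => /=; field.
Qed.
Lemma Cinv0 : Cinv 0%ring = 0%ring.
Proof. by apply: C_ext => /=; rewrite /Rdiv; ring. Qed.
HB.instance Definition _ := GRing.ComNzRing_isField.Build C CmulVx Cinv0.

Lemma re_add (x y : C) : re (x + y)%ring = re x + re y. Proof. by []. Qed.
Lemma im_add (x y : C) : im (x + y)%ring = im x + im y. Proof. by []. Qed.
Lemma re_mul (x y : C) : re (x * y)%ring = re x * re y - im x * im y. Proof. by []. Qed.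
Lemma im_mul (x y : C) : im (x * y)%ring = re x * im y + im x * re y. Proof. by []. Qed.
Lemma re_opp (x : C) : re (- x)%ring = - re x. Proof. by []. Qed.
Lemma im_opp (x : C) : im (- x)%ring = - im x. Proof. by []. Qed.
Lemma re_0 : re 0%ring = 0. Proof. by []. Qed.
Lemma im_0 : im 0%ring = 0. Proof. by []. Qed.
Lemma re_1 : re 1%ring = 1. Proof. by []. Qed.
Lemma im_1 : im 1%ring = 0. Proof. by []. Qed.
Definition reimE :=
  (re_add, im_add, re_mul, im_mul, re_opp, im_opp, re_0, im_0, re_1, im_1).

Definition cR (r : R) : C := mkC r 0.

Lemma Cscal_cR r x : Cscal r x = (cR r * x)%ring.
Proof. by apply: C_ext; rewrite !reimE /=; ring. Qed.

Lemma Cconj_add x y : Cconj (x + y)%ring = (Cconj x + Cconj y)%ring.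
Proof. by apply: C_ext; rewrite /= ?reimE /=; ring. Qed.
Lemma Cconj_mul x y : Cconj (x * y)%ring = (Cconj x * Cconj y)%ring.
Proof. by apply: C_ext; rewrite /= ?reimE /=; ring. Qed.
Lemma Cconj0 : Cconj 0%ring = 0%ring.
Proof. by apply: C_ext; rewrite /= ?reimE; ring. Qed.
Lemma Cconj1 : Cconj 1%ring = 1%ring.
Proof. by apply: C_ext; rewrite /= ?reimE; ring. Qed.
Lemma CconjK : involutive Cconj.
Proof. by move=> x; apply: C_ext => /=; ring. Qed.
Lemma Cconj_cR r : Cconj (cR r) = cR r.
Proof. by apply: C_ext => /=; ring. Qed.
Lemma Cconj_sum n (F : 'I_n -> C) :
  Cconj (\sum_(i < n) F i)%ring = (\sum_(i < n) Cconj (F i))%ring.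
Proof. exact: (big_morph Cconj Cconj_add Cconj0). Qed.

Section MatrixModel.
Local Open Scope ring_scope.
Variable n : nat.

Definition toM (X : Mat) : 'M[C]_n := \matrix_(i < n, j < n) X i j.

Definition fromM (Y : 'M[C]_n) : Mat := fun i j =>
  if insub i is Some i' then if insub j is Some j' then Y i' j' else C0 else C0.

Lemma toM_fromM Y : toM (fromM Y) = Y.
Proof. by apply/matrixP => i j; rewrite mxE /fromM !valK. Qed.

Lemma toM_ext X Y :
  (forall i j, (i < n)%coq_nat -> (j < n)%coq_nat -> X i j = Y i j) -> toM X = toM Y.
Proof. by move=> XY; apply/matrixP => i j; rewrite !mxE XY //; apply/ltP. Qed.

Lemma toM_inj X Y : toM X = toM Y ->
  forall i j, (i < n)%coq_nat -> (j < n)%coq_nat -> X i j = Y i j.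
Proof.
move=> XY i j /ltP i_lt /ltP j_lt.
by have := congr1 (fun M : 'M_n => M (Ordinal i_lt) (Ordinal j_lt)) XY; rewrite !mxE.
Qed.

Lemma Csum_big m f : Csum m f = \sum_(k < m) f k.
Proof. by elim: m => [|m IHm]; rewrite ?big_ord0 // big_ord_recr /= IHm. Qed.

Lemma toM_mul X Y : toM (mmul n X Y) = toM X *m toM Y.
Proof.
by apply/matrixP => i j; rewrite !mxE /mmul Csum_big; apply: eq_bigr => k _; rewrite !mxE.
Qed.

Lemma toM_add X Y : toM (madd X Y) = toM X + toM Y.
Proof. by apply/matrixP => i j; rewrite !mxE. Qed.

Lemma toM_scal r X : toM (mscal r X) = cR r *: toM X.
Proof. by apply/matrixP => i j; rewrite !mxE /mscal Cscal_cR. Qed.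

Lemma toM_mid : toM mid = 1%:M.
Proof.
apply/matrixP => i j; rewrite !mxE /mid.
by case: Nat.eqb_spec => [/val_inj -> | ij]; rewrite ?eqxx // (introF eqP) // => /(congr1 val).
Qed.

Lemma trace_toM X : trace n X = \tr (toM X).
Proof. by rewrite /trace Csum_big; apply: eq_bigr => i _; rewrite mxE. Qed.

End MatrixModel.

Section Adjoint.
Local Open Scope ring_scope.

Definition adj m p (X : 'M[C]_(m, p)) : 'M[C]_(p, m) := \matrix_(i, j) Cconj (X j i).

Lemma adj_mul m p q (X : 'M[C]_(m, p)) (Y : 'M[C]_(p, q)) : adj (X *m Y) = adj Y *m adj X.
Proof.
apply/matrixP => i j; rewrite !mxE Cconj_sum; apply: eq_bigr => k _.
by rewrite !mxE Cconj_mul mulrC.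
Qed.

Lemma adj_add m p (X Y : 'M[C]_(m, p)) : adj (X + Y) = adj X + adj Y.
Proof. by apply/matrixP => i j; rewrite !mxE Cconj_add. Qed.

Lemma adj_scale m p c (X : 'M[C]_(m, p)) : adj (c *: X) = Cconj c *: adj X.
Proof. by apply/matrixP => i j; rewrite !mxE Cconj_mul. Qed.

Lemma adjK m p (X : 'M[C]_(m, p)) : adj (adj X) = X.
Proof. by apply/matrixP => i j; rewrite !mxE CconjK. Qed.

Lemma adj1 n : adj (1%:M : 'M[C]_n) = 1%:M.
Proof. by apply/matrixP => i j; rewrite !mxE eq_sym; case: (i == j); rewrite ?Cconj1 ?Cconj0. Qed.

Lemma adj_delta n (a : 'I_n) : adj (delta_mx a 0 : 'cV[C]_n) = delta_mx 0 a.
Proof.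
apply/matrixP => i j; rewrite !mxE andbC.
by case: (_ && _); rewrite ?Cconj1 ?Cconj0.
Qed.

Lemma mxtrace_adj n (X : 'M[C]_n) : \tr (adj X) = Cconj (\tr X).
Proof. by rewrite /mxtrace Cconj_sum; apply: eq_bigr => i _; rewrite mxE. Qed.

Lemma real_sum_conj_mul (I : finType) (P : pred I) (z : I -> C) :
  im (\sum_(i | P i) Cconj (z i) * z i) = 0%R /\ (0 <= re (\sum_(i | P i) Cconj (z i) * z i))%R.
Proof.
apply: (big_ind (fun w => im w = 0%R /\ (0 <= re w)%R)); rewrite ?reimE.
- by split; lra.
- by move=> u v [? ?] [? ?]; rewrite !reimE; split; lra.
- by move=> i _; rewrite !reimE /=; split; nra.
Qed.

Definition cnorm2 n (x : 'cV[C]_n) : C := (adj x *m x) ord0 ord0.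

Lemma cnorm2E n (x : 'cV[C]_n) : cnorm2 x = \sum_(i < n) Cconj (x i ord0) * x i ord0.
Proof. by rewrite /cnorm2 mxE; apply: eq_bigr => i _; rewrite mxE. Qed.

Lemma im_cnorm2 n (x : 'cV[C]_n) : im (cnorm2 x) = 0%R.
Proof. by rewrite cnorm2E; case: (real_sum_conj_mul xpredT (fun i => x i ord0)). Qed.

Lemma cnorm2_ge_entry n (x : 'cV[C]_n) k :
  (re (x k ord0) * re (x k ord0) + im (x k ord0) * im (x k ord0) <= re (cnorm2 x))%R.
Proof.
rewrite cnorm2E (bigD1 k) // re_add re_mul /=.
have [_ rest_ge0] := real_sum_conj_mul (fun i => i != k) (fun i => x i ord0).
by apply: Rle_trans (Rplus_le_compat_l _ _ _ rest_ge0); lra.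
Qed.

Lemma cnorm2_gt0 n (x : 'cV[C]_n) : x != 0 -> (0 < re (cnorm2 x))%R.
Proof.
move=> x_neq0; have [k xk_neq0] : exists k, x k ord0 != 0.
  apply/existsP; apply: contraNT x_neq0 => /existsPn x0.
  by apply/eqP/matrixP => i j; rewrite (ord1 j) mxE; apply/eqP; rewrite -[_ == _]negbK x0.
apply: Rlt_le_trans (cnorm2_ge_entry x k).
move: xk_neq0; case: (x k ord0) => a b /= /eqP ab_neq0.
have [a_neq0 | b_neq0] : a <> 0%R \/ b <> 0%R.
  case: (Req_dec a 0) => [a0 | ]; last by left.
  by right => b0; apply: ab_neq0; rewrite a0 b0.
- by have := Rsqr_pos_lt a a_neq0; rewrite /Rsqr; nra.
- by have := Rsqr_pos_lt b b_neq0; rewrite /Rsqr; nra.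
Qed.

Definition sesq n (N : 'M[C]_n) (x y : 'cV[C]_n) : C := (adj x *m N *m y) 0 0.
Definition qf n (N : 'M[C]_n) (x : 'cV[C]_n) : C := sesq N x x.

Lemma qf_add n (X Y : 'M[C]_n) x : qf (X + Y) x = qf X x + qf Y x.
Proof. by rewrite /qf /sesq mulmxDr mulmxDl mxE. Qed.

Lemma qf_scale n c (X : 'M[C]_n) x : qf (c *: X) x = c * qf X x.
Proof. by rewrite /qf /sesq -scalemxAr -scalemxAl mxE. Qed.

Lemma qf1 n (x : 'cV[C]_n) : qf 1%:M x = cnorm2 x.
Proof. by rewrite /qf /sesq mulmx1. Qed.

Lemma qf_addZ n (X : 'M[C]_n) x y c :
  qf X (x + c *: y) = qf X x + Cconj c * c * qf X y + c * sesq X x y + Cconj c * sesq X y x.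
Proof.
rewrite /qf /sesq adj_add adj_scale !mulmxDl !mulmxDr -!scalemxAl -!scalemxAr.
move: (adj x *m X *m x) (adj y *m X *m y) (adj x *m X *m y) (adj y *m X *m x) => p q r t.
rewrite !mxE; move: (p _ _) (q _ _) (r _ _) (t _ _) => {}p {}q {}r {}t.
by apply: C_ext; rewrite !reimE /=; ring.
Qed.

Lemma sesq_delta n (X : 'M[C]_n) a b : sesq X (delta_mx a 0) (delta_mx b 0) = X a b.
Proof. by rewrite /sesq adj_delta -rowE -colE !mxE. Qed.

End Adjoint.

Section PositiveSemidefinite.
Local Open Scope ring_scope.
Variable n : nat.

Lemma qformE (N : Mat) (v : nat -> C) (x : 'cV[C]_n) :
  (forall i : 'I_n, v i = x i ord0) -> qform n N v = qf (toM n N) x.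
Proof.
move=> vx; rewrite /qform Csum_big /qf /sesq mxE.
under eq_bigr => i _ do rewrite Csum_big.
rewrite exchange_big; apply: eq_bigr => j _ /=.
rewrite mxE mulr_suml; apply: eq_bigr => i _.
by rewrite !mxE !vx; exact: mulrA.
Qed.

Lemma PSD_qf (N : Mat) : PSD n N ->
  forall x : 'cV[C]_n, im (qf (toM n N) x) = 0%R /\ (0 <= re (qf (toM n N) x))%R.
Proof.
move=> N_psd x.
pose v k := if insub k is Some k' then x k' ord0 else C0.
by rewrite -(@qformE N v) => [|i]; [exact: N_psd | rewrite /v valK].
Qed.

Lemma PSD_add (A B : Mat) : PSD n A -> PSD n B -> PSD n (madd A B).
Proof.
move=> A_psd B_psd v; pose x := \col_(i < n) v i.
have vx (i : 'I_n) : v i = x i ord0 by rewrite mxE.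
have [a_im a_re] := A_psd v; have [b_im b_re] := B_psd v.
rewrite !(qformE _ vx) in a_im a_re b_im b_re *.
by rewrite toM_add qf_add !reimE; split; lra.
Qed.

Lemma PSD_hermitian (N : Mat) : PSD n N -> adj (toM n N) = toM n N.
Proof.
move=> /PSD_qf; set X := toM n N => X_psd.
have im_diag a : im (X a a) = 0%R by have [] := X_psd (delta_mx a 0); rewrite /qf sesq_delta.
apply/matrixP => a b; rewrite mxE.
have [<- | _] := eqVneq a b; first by apply: C_ext => /=; rewrite ?im_diag; lra.
(* Polarization: the form is real at e_a + e_b and at e_a + i e_b, so X b a = conj (X a b). *)
have [h1 _] := X_psd (delta_mx a 0 + 1 *: delta_mx b 0).
have [h2 _] := X_psd (delta_mx a 0 + mkC 0 1 *: delta_mx b 0).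
move: h1 h2; rewrite !qf_addZ !sesq_delta /qf !sesq_delta !reimE /= !im_diag => h1 h2.
by apply: C_ext => /=; lra.
Qed.

Lemma PSD_shift_unitmx (N : Mat) s : PSD n N -> (0 < s)%R ->
  toM n N + cR s *: 1%:M \in unitmx.
Proof.
move=> /PSD_qf N_psd s_gt0; rewrite unitmxE unitfE.
apply/negP => /det0P [v v_neq0 vN].
have x_neq0 : adj v != 0.
  apply: contraNneq v_neq0 => v0; rewrite -[v]adjK v0.
  by apply/eqP/matrixP => i j; rewrite !mxE Cconj0.
have : qf (toM n N + cR s *: 1%:M) (adj v) = 0 by rewrite /qf /sesq adjK vN mul0mx mxE.
rewrite qf_add qf_scale qf1 => /(congr1 re); rewrite !reimE im_cnorm2 /=.
have [_ ?] := N_psd (adj v); have := cnorm2_gt0 x_neq0; nra.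
Qed.

End PositiveSemidefinite.

Definition entry_bound (n : nat) (X : Mat) (c : R) : Prop :=
  forall i j, (i < n)%coq_nat -> (j < n)%coq_nat ->
    Rabs (re (X i j)) <= c /\ Rabs (im (X i j)) <= c.

Lemma entry_bound_le n X c d : entry_bound n X c -> c <= d -> entry_bound n X d.
Proof. by move=> Xc cd i j Hi Hj; have [? ?] := Xc i j Hi Hj; split; lra. Qed.

Lemma Rabs_add3 x y z : Rabs (x + (y + z)) <= Rabs x + Rabs y + Rabs z.
Proof. by have := Rabs_triang x (y + z); have := Rabs_triang y z; lra. Qed.

Lemma Rabs_mul_le x y c d : Rabs x <= c -> Rabs y <= d -> Rabs (x * y) <= c * d.
Proof. by move=> xc yd; rewrite Rabs_mult; apply: Rmult_le_compat; auto using Rabs_pos. Qed.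

Lemma Csum_mul_bound (a b : nat -> C) c d m :
  (forall k, (k < m)%coq_nat -> Rabs (re (a k)) <= c /\ Rabs (im (a k)) <= c) ->
  (forall k, (k < m)%coq_nat -> Rabs (re (b k)) <= d /\ Rabs (im (b k)) <= d) ->
  Rabs (re (Csum m (fun k => Cmul (a k) (b k)))) <= 2 * INR m * c * d /\
  Rabs (im (Csum m (fun k => Cmul (a k) (b k)))) <= 2 * INR m * c * d.
Proof.
elim: m => [|m IHm] ak bk; cbn [Csum re im Cadd Cmul C0].
  by rewrite Rabs_R0 /=; split; lra.
have [|| IHre IHim] := IHm; [by move=> k ?; apply: ak; lia | by move=> k ?; apply: bk; lia |].
have [a_re a_im] := ak m (Nat.lt_succ_diag_r m); have [b_re b_im] := bk m (Nat.lt_succ_diag_r m).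
rewrite S_INR /Rminus; split.
- have := Rabs_add3 (re (Csum m (fun k => Cmul (a k) (b k)))) (re (a m) * re (b m))
    (- (im (a m) * im (b m))).
  rewrite Rabs_Ropp; have := Rabs_mul_le a_re b_re; have := Rabs_mul_le a_im b_im; lra.
- have := Rabs_add3 (im (Csum m (fun k => Cmul (a k) (b k)))) (re (a m) * im (b m))
    (im (a m) * re (b m)).
  have := Rabs_mul_le a_re b_im; have := Rabs_mul_le a_im b_re; lra.
Qed.

Lemma entry_bound_mul n X Y c d : entry_bound n X c -> entry_bound n Y d ->
  entry_bound n (mmul n X Y) (2 * INR n * c * d).
Proof.
by move=> Xc Yd i j Hi Hj; apply: Csum_mul_bound => k Hk; [apply: Xc | apply: Yd].
Qed.

Lemma Rabs_le_inv_of_sqr y t : 0 < t -> y * y <= / t * / t -> Rabs y <= / t.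
Proof.
move=> t_gt0 y2; have inv_gt0 : 0 < / t by apply: Rinv_0_lt_compat.
by rewrite -(Rabs_right (/ t)); [apply: Rsqr_le_abs_0; rewrite /Rsqr; lra | lra].
Qed.

Lemma le_inv_sqr_of_mul_sqr t S : 0 < t -> 0 <= S -> t * t * S * S <= S -> S <= / t * / t.
Proof.
move=> t_gt0 S_ge0 ttSS; rewrite -Rinv_mult; have tt_gt0 : 0 < t * t by nra.
case: (Req_dec S 0) => [-> | S_neq0]; first exact/Rlt_le/Rinv_0_lt_compat.
by apply: (Rmult_le_reg_l (t * t)) => //; rewrite Rinv_r; nra.
Qed.

Section Resolvent.
Local Open Scope ring_scope.
Variables (n : nat) (M : Mat).
Hypothesis M_psd : PSD n M.

Local Notation res s := (toM n (resolv n M s)).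
Local Notation shift s := (toM n M + cR s *: 1%:M).

Lemma resolv_inverse s : (0 < s)%R -> res s *m shift s = 1%:M /\ shift s *m res s = 1%:M.
Proof.
move=> s_gt0; have shiftE : toM n (madd M (mscal s mid)) = shift s.
  by rewrite toM_add toM_scal toM_mid.
have inv_ex : exists X, forall i j, (i < n)%coq_nat -> (j < n)%coq_nat ->
    mmul n X (madd M (mscal s mid)) i j = mid i j /\
    mmul n (madd M (mscal s mid)) X i j = mid i j.
  exists (fromM (invmx (shift s))) => i j Hi Hj; split; apply: toM_inj Hi Hj;
  by rewrite toM_mul toM_fromM toM_mid shiftE ?mulVmx ?mulmxV ?PSD_shift_unitmx.
have inv := epsilon_spec (inhabits mid) _ inv_ex.
rewrite -shiftE -!toM_mul -(toM_mid n).
by split; apply: toM_ext => i j Hi Hj; case: (inv i j Hi Hj).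
Qed.

Lemma resolv_hermitian s : (0 < s)%R -> adj (res s) = res s.
Proof.
move=> /resolv_inverse [res_shift shift_res].
have shift_herm : adj (shift s) = shift s.
  by rewrite adj_add adj_scale adj1 Cconj_cR PSD_hermitian.
have : shift s *m adj (res s) = 1%:M by rewrite -shift_herm -adj_mul res_shift adj1.
by move=> shift_adj; rewrite -[RHS]mulmx1 -shift_adj mulmxA res_shift mul1mx.
Qed.

Lemma resolv_sub s t : (0 < s)%R -> (0 < t)%R ->
  res t = res s + cR (s - t) *: (res t *m res s).
Proof.
move=> /resolv_inverse [_ shift_res] /resolv_inverse [res_shift _].
rewrite -[LHS]mulmx1 -shift_res mulmxA.
have -> : shift s = shift t + cR (s - t) *: 1%:M.
  by rewrite -addrA -scalerDl; congr (_ + _ *: _); apply: C_ext; rewrite !reimE /=; ring.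
by rewrite mulmxDr res_shift -scalemxAr mulmx1 mulmxDl mul1mx -scalemxAl.
Qed.

Lemma resolv_sub2 s t : (0 < s)%R -> (0 < t)%R ->
  res t = res s + cR (s - t) *: (res s *m res s) +
          cR ((s - t) * (s - t)) *: (res t *m res s *m res s).
Proof.
move=> s_gt0 t_gt0; have E := resolv_sub s_gt0 t_gt0.
rewrite {1}E {1}E mulmxDl -scalemxAl scalerDr scalerA addrA.
by congr (_ + _ *: _); apply: C_ext; rewrite !reimE /=; ring.
Qed.

(* The column x = R_t e_j satisfies (M + t) x = e_j, so t |x|^2 <= Re x_j <= |x|,
   i.e. |x| <= 1/t. *)
Lemma resolv_entry_bound t : (0 < t)%R -> entry_bound n (resolv n M t) (/ t).
Proof.
move=> t_gt0 i j /ltP i_lt /ltP j_lt; have [_ shift_res] := resolv_inverse t_gt0.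
pose x := col (Ordinal j_lt) (res t).
have shift_x : shift t *m x = delta_mx (Ordinal j_lt) 0 by rewrite /x colE mulmxA shift_res mul1mx.
have : qf (shift t) x = Cconj (x (Ordinal j_lt) ord0).
  rewrite /qf /sesq -mulmxA shift_x mxE (bigD1 (Ordinal j_lt)) //= big1 => [|k /negbTE k_neq].
    by rewrite !mxE !eqxx mulr1 addr0.
  by rewrite !mxE k_neq mulr0.
rewrite qf_add qf_scale qf1 => /(congr1 re); rewrite !reimE im_cnorm2 /= => qf_re.
have [_ qM_ge0] := PSD_qf M_psd x.
have xi_le := cnorm2_ge_entry x (Ordinal i_lt).
have xj_le := cnorm2_ge_entry x (Ordinal j_lt).
set S := re (cnorm2 x) in qf_re xi_le xj_le.
have tS_le : (t * S <= re (x (Ordinal j_lt) ord0))%R by nra.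
have S_ge0 : (0 <= S)%R by nra.
have tS_ge0 : (0 <= t * S)%R by apply: Rmult_le_pos; lra.
have S_le : (S <= / t * / t)%R.
  apply: le_inv_sqr_of_mul_sqr => //.
  by have := Rmult_le_compat _ _ _ _ tS_ge0 tS_ge0 tS_le tS_le; nra.
have <- : x (Ordinal i_lt) ord0 = resolv n M t i j by rewrite /x !mxE.
by split; apply: Rabs_le_inv_of_sqr => //; nra.
Qed.

End Resolvent.

Lemma improper_int_lincomb (f g u : R -> R) (l m c : R) :
  improper_int f l -> improper_int g m ->
  (forall x, 0 < x -> u x = f x + c * g x) -> improper_int u (l + c * m).
Proof.
move=> [f_int f_lim] [g_int g_lim] uE; split.
  move=> a b a_gt0 ab; have [pf] := f_int a b a_gt0 ab; have [pg] := g_int a b a_gt0 ab.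
  constructor; apply: Riemann_integrable_ext (RiemannInt_P10 c pf pg) => x.
  by rewrite Rmin_left // => x_in; rewrite uE //; lra.
move=> eps eps_gt0; have c1_gt0 : 0 < Rabs c + 1 by have := Rabs_pos c; lra.
have [df [df_gt0 [Bf Hf]]] := f_lim (eps / 2) ltac:(lra).
have [dg [dg_gt0 [Bg Hg]]] := g_lim (eps / (2 * (Rabs c + 1))) ltac:(apply: Rdiv_lt_0_compat; lra).
exists (Rmin df dg); split; first exact: Rmin_pos.
exists (Rmax Bf Bg) => a b pr a_gt0 a_lt b_gt ab.
have [pf] := f_int a b a_gt0 ab; have [pg] := g_int a b a_gt0 ab.
have -> : RiemannInt pr = RiemannInt (RiemannInt_P10 c pf pg).
  by apply: RiemannInt_P18 => // x x_in; rewrite uE //; lra.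
rewrite (RiemannInt_P13 pf pg).
have := Hf a b pf a_gt0 (Rlt_le_trans _ _ _ a_lt (Rmin_l _ _))
  (Rle_lt_trans _ _ _ (Rmax_l _ _) b_gt) ab.
have := Hg a b pg a_gt0 (Rlt_le_trans _ _ _ a_lt (Rmin_r _ _))
  (Rle_lt_trans _ _ _ (Rmax_r _ _) b_gt) ab.
move=> g_near f_near.
have -> : RiemannInt pf + c * RiemannInt pg - (l + c * m) =
  (RiemannInt pf - l) + c * (RiemannInt pg - m) by ring.
apply: Rle_lt_trans (Rabs_triang _ _) _; rewrite Rabs_mult.
have : Rabs c * Rabs (RiemannInt pg - m) <= (Rabs c + 1) * (eps / (2 * (Rabs c + 1))).
  by apply: Rmult_le_compat; try apply: Rabs_pos; lra.
have -> : (Rabs c + 1) * (eps / (2 * (Rabs c + 1))) = eps / 2 by field; lra.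
lra.
Qed.

Lemma improper_int_ext (f u : R -> R) l :
  improper_int f l -> (forall x, 0 < x -> u x = f x) -> improper_int u l.
Proof.
move=> f_int uE; rewrite -[l](Rplus_0_r l) -(Rmult_0_l l).
by apply: (improper_int_lincomb f_int f_int) => x x_gt0; rewrite uE //; ring.
Qed.

Lemma improper_int0 : improper_int (fun _ => 0) 0.
Proof.
split=> [a b _ _ | eps eps_gt0]; first by constructor; apply: RiemannInt_P14.
exists 1; split; [lra | exists 0 => a b pr _ _ _ _].
by rewrite (RiemannInt_P15 pr) Rmult_0_l Rminus_0_r Rabs_R0.
Qed.

Lemma improper_int_scale (g : R -> R) m c :
  improper_int g m -> improper_int (fun s => c * g s) (c * m).
Proof.
move=> g_int; rewrite -[c * m]Rplus_0_l.
by apply: (improper_int_lincomb improper_int0 g_int) => x _; ring.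
Qed.

Lemma improper_int_unique f l m : improper_int f l -> improper_int f m -> l = m.
Proof.
move=> [f_int l_lim] [_ m_lim]; apply: Rminus_diag_uniq.
case: (Req_dec (l - m) 0) => // lm_neq0; exfalso.
have e_gt0 : 0 < Rabs (l - m) / 2 by have := Rabs_pos_lt _ lm_neq0; lra.
have [d1 [d1_gt0 [B1 H1]]] := l_lim _ e_gt0; have [d2 [d2_gt0 [B2 H2]]] := m_lim _ e_gt0.
have d_gt0 := Rmin_pos _ _ d1_gt0 d2_gt0.
pose a := Rmin d1 d2 / 2; pose b := Rmax (Rmax B1 B2) a + 1.
have a_gt0 : 0 < a by rewrite /a; lra.
have ab : a <= b by have := Rmax_r (Rmax B1 B2) a; rewrite /b; lra.
have [pr] := f_int a b a_gt0 ab.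
have a_lt1 : a < d1 by have := Rmin_l d1 d2; rewrite /a; lra.
have a_lt2 : a < d2 by have := Rmin_r d1 d2; rewrite /a; lra.
have b_gt1 : B1 < b by have := Rmax_l (Rmax B1 B2) a; have := Rmax_l B1 B2; rewrite /b; lra.
have b_gt2 : B2 < b by have := Rmax_l (Rmax B1 B2) a; have := Rmax_r B1 B2; rewrite /b; lra.
have := H1 a b pr a_gt0 a_lt1 b_gt1 ab; have := H2 a b pr a_gt0 a_lt2 b_gt2 ab.
have := Rabs_triang (RiemannInt pr - m) (l - RiemannInt pr).
rewrite -(Rabs_Ropp (RiemannInt pr - l)).
have -> : RiemannInt pr - m + (l - RiemannInt pr) = l - m by ring.
have -> : - (RiemannInt pr - l) = l - RiemannInt pr by ring.
lra.
Qed.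

Lemma improper_int_eq0 f l : improper_int f l -> (forall x, 0 < x -> f x = 0) -> l = 0.
Proof.
by move=> f_int f0; apply: (improper_int_unique f_int (improper_int_ext improper_int0 f0)).
Qed.

Lemma improper_int_dyadic_small (phi : R -> R) l : improper_int phi l ->
  forall eps, 0 < eps -> exists d, 0 < d /\ exists B,
    forall x (pr : Riemann_integrable phi x (2 * x)), 0 < x -> 2 * x < d \/ B < x ->
      Rabs (RiemannInt pr) < 2 * eps.
Proof.
move=> [phi_int phi_lim] eps eps_gt0.
have [d [d_gt0 [B near_l]]] := phi_lim eps eps_gt0.
exists d; split=> //; exists B => x pr x_gt0 [x_small | x_large].
- pose b := Rmax B (2 * x) + 1.
  have B_lt_b : B < b by have := Rmax_l B (2 * x); rewrite /b; lra.
  have x2_lt_b : 2 * x < b by have := Rmax_r B (2 * x); rewrite /b; lra.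
  have [pxb] := phi_int x b x_gt0 ltac:(lra).
  have [p2b] := phi_int (2 * x) b ltac:(lra) ltac:(lra).
  have := RiemannInt_P26 pr p2b pxb.
  have /Rabs_def2 := near_l x b pxb x_gt0 ltac:(lra) ltac:(lra) ltac:(lra).
  have /Rabs_def2 := near_l (2 * x) b p2b ltac:(lra) ltac:(lra) ltac:(lra) ltac:(lra).
  by move=> ? ? ?; apply: Rabs_def1; lra.
- pose a := Rmin (d / 2) x.
  have a_gt0 : 0 < a by apply: Rmin_pos; lra.
  have a_lt_d : a < d by have := Rmin_l (d / 2) x; rewrite /a; lra.
  have a_le_x : a <= x by apply: Rmin_r.
  have [pax] := phi_int a x ltac:(lra) ltac:(lra).
  have [pa2x] := phi_int a (2 * x) ltac:(lra) ltac:(lra).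
  have := RiemannInt_P26 pax pr pa2x.
  have /Rabs_def2 := near_l a x pax ltac:(lra) ltac:(lra) ltac:(lra) ltac:(lra).
  have /Rabs_def2 := near_l a (2 * x) pa2x ltac:(lra) ltac:(lra) ltac:(lra) ltac:(lra).
  by move=> ? ? ?; apply: Rabs_def1; lra.
Qed.

(* With G s := s * phi s, phi s >= (G x - 2 eps) / (2 x) on [x, 2 x], so the integral is at
   least (G x - 2 eps) / 2; symmetrically from above. *)
Lemma dyadic_average_bound (phi : R -> R) x (pr : Riemann_integrable phi x (2 * x)) eps :
  0 < x -> 0 < eps ->
  (forall s, x < s < 2 * x -> Rabs (s * phi s - x * phi x) < 2 * eps) ->
  Rabs (RiemannInt pr) < 2 * eps -> Rabs (x * phi x) < 6 * eps.
Proof.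
move=> x_gt0 eps_gt0 osc /Rabs_def2 [int_lt int_gt]; apply: Rabs_def1.
- case: (Rle_or_lt (x * phi x - 2 * eps) 0) => [| G_big]; first lra.
  pose c := (x * phi x - 2 * eps) / (2 * x).
  have c_gt0 : 0 < c by apply: Rdiv_lt_0_compat; lra.
  have cE : x * phi x - 2 * eps = 2 * x * c by rewrite /c; field; lra.
  have pc := RiemannInt_P14 x (2 * x) c.
  have : RiemannInt pc <= RiemannInt pr.
    apply: RiemannInt_P19 => [| s s_in]; first lra.
    have /Rabs_def2 [? ?] := osc s s_in; rewrite /fct_cte.
    have : s * c < 2 * x * c by apply: Rmult_lt_compat_r; lra.
    by move=> ?; apply: Rlt_le; apply: (Rmult_lt_reg_l s); lra.
  by rewrite (RiemannInt_P15 pc); nra.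
- case: (Rle_or_lt 0 (x * phi x + 2 * eps)) => [| G_small]; first lra.
  pose c := (x * phi x + 2 * eps) / (2 * x).
  have c_lt0 : c < 0 by apply: Rdiv_neg_pos; lra.
  have cE : x * phi x + 2 * eps = 2 * x * c by rewrite /c; field; lra.
  have pc := RiemannInt_P14 x (2 * x) c.
  have : RiemannInt pr <= RiemannInt pc.
    apply: RiemannInt_P19 => [| s s_in]; first lra.
    have /Rabs_def2 [? ?] := osc s s_in; rewrite /fct_cte.
    have : c * (2 * x) < c * s by apply: Rmult_lt_gt_compat_neg_l; lra.
    by move=> ?; apply: Rlt_le; apply: (Rmult_lt_reg_l s); nra.
  by rewrite (RiemannInt_P15 pc); nra.
Qed.

(* [x phi x] has limits at 0 and at infinity because the integrals of psi converge, and both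
   limits vanish because phi is integrable. *)
Lemma improper_int_boundary_zero (phi psi : R -> R) l m :
  improper_int phi l -> improper_int psi m ->
  (forall a b, 0 < a -> a <= b -> forall pr : Riemann_integrable psi a b,
     RiemannInt pr = b * phi b - a * phi a) -> m = 0.
Proof.
move=> phi_int [psi_int psi_lim] psiE.
suff small : forall eps, 0 < eps -> Rabs m < 13 * eps.
  case: (Req_dec m 0) => // m_neq0; have := Rabs_pos_lt _ m_neq0.
  by move=> m_gt0; have := small (Rabs m / 13) ltac:(lra); lra.
move=> eps eps_gt0.
have [d0 [d0_gt0 [B0 psi_near]]] := psi_lim eps eps_gt0.
have [d1 [d1_gt0 [B1 dyadic]]] := improper_int_dyadic_small phi_int eps_gt0.
pose d := Rmin d0 d1; pose B := Rmax (Rmax B0 B1) d.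
have d_gt0 : 0 < d by apply: Rmin_pos.
have d_le0 : d <= d0 by apply: Rmin_l.
have d_le1 : d <= d1 by apply: Rmin_r.
have d_le_B : d <= B by apply: Rmax_r.
have B_ge01 : Rmax B0 B1 <= B by apply: Rmax_l.
have B0_le : B0 <= B by have := Rmax_l B0 B1; lra.
have B1_le : B1 <= B by have := Rmax_r B0 B1; lra.
have diff_near a' b' : 0 < a' -> a' < d -> B < b' -> Rabs (b' * phi b' - a' * phi a' - m) < eps.
  move=> a'_gt0 a'_lt b'_gt; have [pr] := psi_int a' b' a'_gt0 ltac:(lra).
  by rewrite -(psiE a' b' a'_gt0 ltac:(lra) pr); apply: psi_near; lra.
have G_small x : 0 < x -> 2 * x < d \/ B < x ->
    (forall s, x < s < 2 * x -> Rabs (s * phi s - x * phi x) < 2 * eps) ->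
    Rabs (x * phi x) < 6 * eps.
  move=> x_gt0 x_range osc; have [pr] := (proj1 phi_int) x (2 * x) x_gt0 ltac:(lra).
  by apply: (@dyadic_average_bound _ _ pr) => //; apply: dyadic; lra.
pose a := d / 4; pose b := B + 1.
have a_gt0 : 0 < a by rewrite /a; lra.
have ab_near := diff_near a b a_gt0 ltac:(rewrite /a; lra) ltac:(rewrite /b; lra).
have Ga : Rabs (a * phi a) < 6 * eps.
  apply: G_small => //; first by left; rewrite /a; lra.
  move=> s s_in.
  have := diff_near s b ltac:(lra) ltac:(rewrite /a in s_in; lra) ltac:(rewrite /b; lra).
  by move: ab_near => /Rabs_def2 ? /Rabs_def2 ?; apply: Rabs_def1; lra.
have Gb : Rabs (b * phi b) < 6 * eps.
  apply: G_small; [rewrite /b; lra | right; rewrite /b; lra |].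
  move=> s s_in; have := diff_near a s a_gt0 ltac:(rewrite /a; lra) ltac:(rewrite /b in s_in; lra).
  by move: ab_near => /Rabs_def2 ? /Rabs_def2 ?; apply: Rabs_def1; lra.
move: ab_near Ga Gb => /Rabs_def2 ? /Rabs_def2 ? /Rabs_def2 ?; apply: Rabs_def1; lra.
Qed.

Lemma RiemannInt_antiderivative (h G : R -> R) a b : a <= b ->
  (forall x, a <= x <= b -> continuity_pt h x) ->
  (forall x, a <= x <= b -> derivable_pt_lim G x (h x)) ->
  forall pr : Riemann_integrable h a b, RiemannInt pr = G b - G a.
Proof.
move=> ab h_cont G_deriv pr.
rewrite (RiemannInt_P20 ab (FTC_P1 ab h_cont) pr).
have G_anti : antiderivative h G a b.
  split=> // x x_in; exists (exist _ (h x) (G_deriv x x_in)).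
  by symmetry; apply: derive_pt_eq_0; apply: G_deriv.
have [c Gc] := antiderivative_Ucte _ _ _ _ _ (RiemannInt_P29 ab h_cont) G_anti.
by rewrite (Gc b) ?(Gc a); try lra; ring.
Qed.

(* p = (x phi)' + phi, and the boundary term [x phi x] vanishes. *)
Lemma improper_int_xderiv (phi dphi p : R -> R) l m :
  improper_int phi l -> improper_int p m ->
  (forall x, 0 < x -> derivable_pt_lim phi x (dphi x)) ->
  (forall x, 0 < x -> continuity_pt p x) ->
  (forall x, 0 < x -> p x = 2 * phi x + x * dphi x) -> m = l.
Proof.
move=> phi_int p_int phi_deriv p_cont pE.
have psi_int := improper_int_lincomb p_int phi_int (fun x _ => erefl (p x + -1 * phi x)).
suff : m + -1 * l = 0 by lra.
apply: (improper_int_boundary_zero phi_int psi_int) => a b a_gt0 ab pr.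
apply: (@RiemannInt_antiderivative _ (fun x => x * phi x) _ _ ab) => x x_in.
  have phi_cont : continuity_pt phi x.
    by apply: derivable_continuous_pt; exists (dphi x); apply: phi_deriv; lra.
  by apply: (continuity_pt_plus _ _ _ (p_cont x ltac:(lra)) (continuity_pt_scal _ (-1) _ phi_cont)).
have := derivable_pt_lim_mult id phi x 1 (dphi x) (derivable_pt_lim_id x) (phi_deriv x ltac:(lra)).
by rewrite pE; [congr derivable_pt_lim; ring | lra].
Qed.

Definition improper_Cint (h : R -> C) (c : C) : Prop :=
  improper_int (fun s => re (h s)) (re c) /\ improper_int (fun s => im (h s)) (im c).

Lemma improper_Cint_add h1 h2 c1 c2 : improper_Cint h1 c1 -> improper_Cint h2 c2 ->
  improper_Cint (fun s => Cadd (h1 s) (h2 s)) (Cadd c1 c2).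
Proof.
move=> [re1 im1] [re2 im2]; split=> /=; rewrite -[X in _ (_ + X)]Rmult_1_l.
- by apply: (improper_int_lincomb re1 re2) => x _; ring.
- by apply: (improper_int_lincomb im1 im2) => x _; ring.
Qed.

Lemma improper_Cint_mull a h c :
  improper_Cint h c -> improper_Cint (fun s => Cmul a (h s)) (Cmul a c).
Proof.
move=> [h_re h_im]; split=> /=.
- have -> : re a * re c - im a * im c = re a * re c + - im a * im c by ring.
  by apply: (improper_int_lincomb (improper_int_scale (re a) h_re) h_im) => x _; ring.
- by apply: (improper_int_lincomb (improper_int_scale (re a) h_im) h_re) => x _; ring.
Qed.

Lemma improper_Cint_Csum m (h : R -> nat -> C) (c : nat -> C) :
  (forall k, (k < m)%coq_nat -> improper_Cint (fun s => h s k) (c k)) ->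
  improper_Cint (fun s => Csum m (h s)) (Csum m c).
Proof.
elim: m => [|m IHm] hk /=; first by split; apply: improper_int0.
apply: improper_Cint_add; last by apply: hk; lia.
by apply: IHm => k k_lt; apply: hk; lia.
Qed.

Lemma improper_Cint_trace n F L X : mx_improper_int n F L ->
  improper_Cint (fun s => trace n (mmul n X (F s))) (trace n (mmul n X L)).
Proof.
move=> FL; apply: improper_Cint_Csum => i i_lt; apply: improper_Cint_Csum => k k_lt.
exact/improper_Cint_mull/FL.
Qed.

Lemma derivable_pt_lim_quadratic (f : R -> R) s a K d : 0 < d ->
  (forall h, Rabs h < d -> Rabs (f (s + h) - f s - a * h) <= K * (h * h)) ->
  derivable_pt_lim f s a.
Proof.
move=> d_gt0 rem eps eps_gt0; have K1_gt0 : 0 < Rabs K + 1 by have := Rabs_pos K; lra.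
have delta_gt0 : 0 < Rmin d (eps / (Rabs K + 1)) by apply: Rmin_pos; [| apply: Rdiv_lt_0_compat].
exists (mkposreal _ delta_gt0) => h h_neq0 /= h_lt.
have h_lt_d : Rabs h < d by apply: Rlt_le_trans h_lt (Rmin_l _ _).
have h_lt_eps : Rabs h * (Rabs K + 1) < eps.
  have := Rlt_le_trans _ _ _ h_lt (Rmin_r _ _) => h_small.
  by have := Rmult_lt_compat_r _ _ _ K1_gt0 h_small; rewrite /Rdiv Rmult_assoc Rinv_l; lra.
have absh_gt0 := Rabs_pos_lt _ h_neq0.
have qE : ((f (s + h) - f s) / h - a) * h = f (s + h) - f s - a * h by field.
have : Rabs ((f (s + h) - f s) / h - a) * Rabs h <= Rabs K * Rabs h * Rabs h.
  rewrite -Rabs_mult qE; apply: Rle_trans (rem h h_lt_d) _.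
  have hh : Rabs h * Rabs h = h * h.
    by rewrite -Rabs_mult Rabs_right //; apply: Rle_ge; apply: Rle_0_sqr.
  by rewrite Rmult_assoc hh; apply: Rmult_le_compat_r; [apply: Rle_0_sqr | apply: RRle_abs].
by move=> /(Rmult_le_reg_r _ _ _ absh_gt0) q_le; nra.
Qed.

Definition Cderivable_pt_lim (F : R -> C) (s : R) (d : C) : Prop :=
  derivable_pt_lim (fun t => re (F t)) s (re d) /\
  derivable_pt_lim (fun t => im (F t)) s (im d).

Lemma Cderivable_pt_lim_const c s : Cderivable_pt_lim (fun _ => c) s C0.
Proof. by split; apply: derivable_pt_lim_const. Qed.

Lemma Cderivable_pt_lim_add F G s d e :
  Cderivable_pt_lim F s d -> Cderivable_pt_lim G s e ->
  Cderivable_pt_lim (fun t => Cadd (F t) (G t)) s (Cadd d e).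
Proof. by move=> [F_re F_im] [G_re G_im]; split; apply: derivable_pt_lim_plus. Qed.

Lemma Cderivable_pt_lim_mul F G s d e :
  Cderivable_pt_lim F s d -> Cderivable_pt_lim G s e ->
  Cderivable_pt_lim (fun t => Cmul (F t) (G t)) s (Cadd (Cmul d (G s)) (Cmul (F s) e)).
Proof.
move=> [F_re F_im] [G_re G_im]; split=> /=.
- have := derivable_pt_lim_minus _ _ _ _ _ (derivable_pt_lim_mult _ _ _ _ _ F_re G_re)
    (derivable_pt_lim_mult _ _ _ _ _ F_im G_im).
  by rewrite /minus_fct /mult_fct; congr derivable_pt_lim; ring.
- have := derivable_pt_lim_plus _ _ _ _ _ (derivable_pt_lim_mult _ _ _ _ _ F_re G_im)
    (derivable_pt_lim_mult _ _ _ _ _ F_im G_re).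
  by rewrite /plus_fct /mult_fct; congr derivable_pt_lim; ring.
Qed.

Lemma Cderivable_pt_lim_scal r F s d :
  Cderivable_pt_lim F s d -> Cderivable_pt_lim (fun t => Cscal r (F t)) s (Cscal r d).
Proof. by move=> [F_re F_im]; split; apply: derivable_pt_lim_scal. Qed.

Lemma Cderivable_pt_lim_Csum m (F : R -> nat -> C) (D : nat -> C) s :
  (forall k, (k < m)%coq_nat -> Cderivable_pt_lim (fun t => F t k) s (D k)) ->
  Cderivable_pt_lim (fun t => Csum m (F t)) s (Csum m D).
Proof.
elim: m => [|m IHm] Fk /=; first exact: Cderivable_pt_lim_const.
by apply: Cderivable_pt_lim_add; [apply: IHm => k ?; apply: Fk; lia | apply: Fk; lia].
Qed.

Lemma Cderivable_pt_lim_continuous F s d : Cderivable_pt_lim F s d ->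
  continuity_pt (fun t => re (F t)) s /\ continuity_pt (fun t => im (F t)) s.
Proof. by move=> [F_re F_im]; split; apply: derivable_continuous_pt; eexists; eassumption. Qed.

Definition mx_derivable_pt_lim (n : nat) (F : R -> Mat) (s : R) (D : Mat) : Prop :=
  forall i j, (i < n)%coq_nat -> (j < n)%coq_nat -> Cderivable_pt_lim (fun t => F t i j) s (D i j).

Section MatrixDerivative.
Variable n : nat.

Lemma Csum_add m (X Y : nat -> C) : Cadd (Csum m X) (Csum m Y) = Csum m (fun k => Cadd (X k) (Y k)).
Proof.
elim: m => [|m IHm] /=; first by apply: C_ext => /=; ring.
by rewrite -IHm; apply: C_ext => /=; ring.
Qed.

Lemma mx_derivable_pt_lim_mul F G s D E :
  mx_derivable_pt_lim n F s D -> mx_derivable_pt_lim n G s E ->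
  mx_derivable_pt_lim n (fun t => mmul n (F t) (G t)) s (madd (mmul n D (G s)) (mmul n (F s) E)).
Proof.
move=> FD GE i j i_lt j_lt; rewrite /mmul /madd Csum_add.
by apply: Cderivable_pt_lim_Csum => k k_lt; apply: Cderivable_pt_lim_mul; [apply: FD | apply: GE].
Qed.

Lemma mx_derivable_pt_lim_mull X F s D : mx_derivable_pt_lim n F s D ->
  mx_derivable_pt_lim n (fun t => mmul n X (F t)) s (mmul n X D).
Proof.
move=> FD i j i_lt j_lt; apply: Cderivable_pt_lim_Csum => k k_lt.
have [F_re F_im] := FD k j k_lt j_lt.
by split=> /=; [apply: derivable_pt_lim_minus | apply: derivable_pt_lim_plus];
  apply: derivable_pt_lim_scal.
Qed.

Lemma mx_derivable_pt_lim_mulr X F s D : mx_derivable_pt_lim n F s D ->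
  mx_derivable_pt_lim n (fun t => mmul n (F t) X) s (mmul n D X).
Proof.
move=> FD i j i_lt j_lt; apply: Cderivable_pt_lim_Csum => k k_lt.
have [F_re F_im] := FD i k i_lt k_lt.
by split=> /=; [apply: derivable_pt_lim_minus | apply: derivable_pt_lim_plus];
  apply: derivable_pt_lim_scal_right.
Qed.

Lemma mx_derivable_pt_lim_scal r F s D : mx_derivable_pt_lim n F s D ->
  mx_derivable_pt_lim n (fun t => mscal r (F t)) s (mscal r D).
Proof. by move=> FD i j i_lt j_lt; apply: Cderivable_pt_lim_scal; apply: FD. Qed.

Lemma Cderivable_pt_lim_trace F s D : mx_derivable_pt_lim n F s D ->
  Cderivable_pt_lim (fun t => trace n (F t)) s (trace n D).
Proof. by move=> FD; apply: Cderivable_pt_lim_Csum => i i_lt; apply: FD. Qed.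

Lemma mx_derivable_pt_lim_resolv M s : PSD n M -> 0 < s ->
  mx_derivable_pt_lim n (resolv n M) s (mscal (-1) (mmul n (resolv n M s) (resolv n M s))).
Proof.
move=> M_psd s_gt0 i j i_lt j_lt.
(* R_t = R_s + (s - t) R_s^2 + (s - t)^2 R_t R_s R_s, whose last factor is bounded for t > s/2. *)
pose T t := mmul n (mmul n (resolv n M t) (resolv n M s)) (resolv n M s).
have [K T_bound] : exists K, forall t, s / 2 < t -> entry_bound n (T t) K.
  exists (2 * INR n * (2 * INR n * (2 / s) * / s) * / s) => t t_gt; have t_gt0 : 0 < t by lra.
  have inv_t : / t <= 2 / s.
    by rewrite /Rdiv -(Rinv_inv 2) -Rinv_mult; apply: Rinv_le_contravar; lra.
  apply: entry_bound_mul (resolv_entry_bound M_psd s_gt0).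
  apply: entry_bound_mul (resolv_entry_bound M_psd s_gt0).
  exact: entry_bound_le (resolv_entry_bound M_psd t_gt0) inv_t.
have expand t : 0 < t -> resolv n M t i j =
    Cadd (Cadd (resolv n M s i j) (Cscal (s - t) (mmul n (resolv n M s) (resolv n M s) i j)))
         (Cscal ((s - t) * (s - t)) (T t i j)).
  move=> t_gt0; apply: (@toM_inj n _ (madd (madd (resolv n M s)
    (mscal (s - t) (mmul n (resolv n M s) (resolv n M s)))) (mscal ((s - t) * (s - t)) (T t)))) => //.
  by rewrite !toM_add !toM_scal !toM_mul; apply: resolv_sub2.
have deriv (g : C -> R) : (forall x y, g (Cadd x y) = g x + g y) ->
    (forall r x, g (Cscal r x) = r * g x) -> (forall t, s / 2 < t -> Rabs (g (T t i j)) <= K) ->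
    derivable_pt_lim (fun t => g (resolv n M t i j)) s
      (g (mscal (-1) (mmul n (resolv n M s) (resolv n M s)) i j)).
  move=> g_add g_scal g_bound.
  apply: (@derivable_pt_lim_quadratic _ _ _ K (s / 2)) => [|h h_lt]; first lra.
  have h_bound := Rabs_def2 _ _ h_lt.
  rewrite expand; last lra.
  rewrite /mscal !g_add !g_scal.
  have -> : g (resolv n M s i j) + (s - (s + h)) * g (mmul n (resolv n M s) (resolv n M s) i j) +
    (s - (s + h)) * (s - (s + h)) * g (T (s + h) i j) - g (resolv n M s i j) -
    -1 * g (mmul n (resolv n M s) (resolv n M s) i j) * h = h * h * g (T (s + h) i j) by ring.
  rewrite Rabs_mult (Rabs_right (h * h)) 1?Rmult_comm; last by apply: Rle_ge; apply: Rle_0_sqr.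
  by apply: Rmult_le_compat_r; [apply: Rle_0_sqr | apply: g_bound; lra].
by split; apply: deriv => // t t_gt; have [] := T_bound t t_gt i j i_lt j_lt.
Qed.

End MatrixDerivative.

Lemma improper_Cint_xderiv (phi dphi p : R -> C) l m :
  improper_Cint phi l -> improper_Cint p m ->
  (forall x, 0 < x -> Cderivable_pt_lim phi x (dphi x)) ->
  (forall x, 0 < x -> exists d, Cderivable_pt_lim p x d) ->
  (forall x, 0 < x -> p x = Cadd (Cscal 2 (phi x)) (Cscal x (dphi x))) -> m = l.
Proof.
move=> [phi_re phi_im] [p_re p_im] phi_deriv p_deriv pE; apply: C_ext.
- apply: (improper_int_xderiv phi_re p_re (dphi := fun x => re (dphi x))).
  + by move=> x /phi_deriv [].
  + by move=> x /p_deriv [d /Cderivable_pt_lim_continuous []].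
  + by move=> x /pE ->.
- apply: (improper_int_xderiv phi_im p_im (dphi := fun x => im (dphi x))).
  + by move=> x /phi_deriv [].
  + by move=> x /p_deriv [d /Cderivable_pt_lim_continuous []].
  + by move=> x /pE ->.
Qed.

Section TraceIdentities.
Local Open Scope ring_scope.
Variables (n : nat) (A Rr : 'M[C]_n).

(* With X R = 1 - c R (X = M, R = (M + c)^-1), both sides reduce by cyclicity to
   2 tr(A R A R) - 2 c tr(R A R A R). *)
Lemma mxtrace_shift_resolvent X c : X *m Rr = 1%:M - c *: Rr ->
  \tr (X *m (cR 2 *: (Rr *m A *m Rr *m A *m Rr))) =
  cR 2 * \tr (A *m (Rr *m A *m Rr)) +
  c * \tr (A *m (cR (-1) *: (Rr *m Rr) *m A *m Rr + Rr *m A *m (cR (-1) *: (Rr *m Rr)))).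
Proof.
move=> XRr; rewrite -!scalemxAr -!scalemxAl !mulmxA XRr mulmxBl mul1mx -scalemxAl.
rewrite mulmxDr -!scalemxAr !mulmxA !mulmxBl -!scalemxAl ?mulmxA.
rewrite -scaleNr !(mxtraceZ, mxtraceD).
have -> : \tr (A *m Rr *m Rr *m A *m Rr) = \tr (Rr *m A *m Rr *m A *m Rr).
  by have := mxtrace_mulC (A *m Rr) (Rr *m A *m Rr); rewrite !mulmxA.
have -> : \tr (A *m Rr *m A *m Rr *m Rr) = \tr (Rr *m A *m Rr *m A *m Rr).
  by have := mxtrace_mulC (A *m Rr *m A *m Rr) Rr; rewrite !mulmxA.
move: (\tr (Rr *m A *m Rr *m A *m Rr)) (\tr (A *m Rr *m A *m Rr)) => u v.
by apply: C_ext; rewrite !reimE /=; ring.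
Qed.

Lemma mxtrace_hermitian_real : adj A = A -> adj Rr = Rr ->
  im (\tr (A *m (Rr *m A *m Rr))) = 0%R.
Proof.
move=> A_herm Rr_herm.
have : Cconj (\tr (A *m (Rr *m A *m Rr))) = \tr (A *m (Rr *m A *m Rr)).
  rewrite -mxtrace_adj !adj_mul A_herm Rr_herm.
  by have := mxtrace_mulC Rr (A *m Rr *m A); rewrite !mulmxA.
by move=> /(congr1 im) /=; lra.
Qed.

End TraceIdentities.

Section Integrands.
Variables (n : nat) (M A : Mat).
Hypothesis M_psd : PSD n M.

Local Notation res := (resolv n M).
Local Notation dres s := (mscal (-1) (mmul n (res s) (res s))).

Definition opT_integrand (s : R) : C :=
  trace n (mmul n A (mmul n (mmul n (res s) A) (res s))).

Definition opT_integrand_deriv (s : R) : C :=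
  trace n (mmul n A
    (madd (mmul n (mmul n (dres s) A) (res s)) (mmul n (mmul n (res s) A) (dres s)))).

Definition opR_integrand (s : R) : C :=
  trace n (mmul n M (mscal 2 (mmul n (mmul n (mmul n (mmul n (res s) A) (res s)) A) (res s)))).

Lemma opT_integrand_derivable s : 0 < s ->
  Cderivable_pt_lim opT_integrand s (opT_integrand_deriv s).
Proof.
move=> s_gt0; have res_deriv := mx_derivable_pt_lim_resolv M_psd s_gt0.
apply/Cderivable_pt_lim_trace/mx_derivable_pt_lim_mull.
exact/mx_derivable_pt_lim_mul/res_deriv/mx_derivable_pt_lim_mulr.
Qed.

Lemma opR_integrand_derivable s : 0 < s -> exists d, Cderivable_pt_lim opR_integrand s d.
Proof.
move=> s_gt0; have res_deriv := mx_derivable_pt_lim_resolv M_psd s_gt0.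
eexists; apply/Cderivable_pt_lim_trace/mx_derivable_pt_lim_mull/mx_derivable_pt_lim_scal.
apply/mx_derivable_pt_lim_mul/res_deriv/mx_derivable_pt_lim_mulr/mx_derivable_pt_lim_mul/res_deriv.
exact: (mx_derivable_pt_lim_mulr _ res_deriv).
Qed.

Lemma opR_integrandE s : 0 < s ->
  opR_integrand s = Cadd (Cscal 2 (opT_integrand s)) (Cscal s (opT_integrand_deriv s)).
Proof.
move=> s_gt0; have [_ shift_res] := resolv_inverse M_psd s_gt0.
rewrite /opR_integrand /opT_integrand /opT_integrand_deriv !Cscal_cR !trace_toM.
rewrite !(toM_mul, toM_add, toM_scal); apply: mxtrace_shift_resolvent.
by rewrite -shift_res mulmxDl -scalemxAl mul1mx addrK.
Qed.

Lemma opT_integrand_real s : PSD n A -> 0 < s -> im (opT_integrand s) = 0.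
Proof.
move=> A_psd s_gt0; rewrite /opT_integrand trace_toM !toM_mul.
by apply: mxtrace_hermitian_real; [apply: PSD_hermitian | apply: resolv_hermitian].
Qed.

End Integrands.

Theorem lemma4 (n : nat) (A B : Mat) (hA : PSD n A) (hB : PSD n B)
  (T Rm : Mat)
  (hT : is_opT n (madd A B) A T)
  (hR : is_opR n (madd A B) A Rm) :
  im (trace n (mmul n (madd A B) Rm)) = 0 /\
  im (trace n (mmul n A T)) = 0 /\
  re (trace n (mmul n A T)) <= re (trace n (mmul n (madd A B) Rm)).
Proof.
have M_psd := PSD_add hA hB.
have T_int : improper_Cint (opT_integrand n (madd A B) A) (trace n (mmul n A T)).
  exact: improper_Cint_trace.
have R_int : improper_Cint (opR_integrand n (madd A B) A) (trace n (mmul n (madd A B) Rm)).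
  exact: improper_Cint_trace.
have -> : trace n (mmul n (madd A B) Rm) = trace n (mmul n A T).
  apply: (improper_Cint_xderiv T_int R_int (dphi := opT_integrand_deriv n (madd A B) A)).
  - exact: opT_integrand_derivable.
  - exact: opR_integrand_derivable.
  - exact: opR_integrandE.
have T_real : im (trace n (mmul n A T)) = 0.
  by apply: (improper_int_eq0 T_int.2) => s; exact: (opT_integrand_real M_psd hA).
by split; [|split]; lra.
Qed.
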